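(* (i) Let $Q$ be a QNP and $\pi$ a policy for $Q$. If $\tau=s_0,s_1,\dots$ is an infinite $\pi$-trajectory of $Q$, then the sequence of boolean states $\bar\tau=\bar s_0,\bar s_1,\dots$ is an infinite $\pi$-trajectory of the FOND problem $P=T_D(Q)$. (ii) The converse fails: there exist a QNP $Q$, a policy $\pi$ for $Q$ and an infinite $\pi$-trajectory $\bar s_0,\bar s_1,\dots$ of $T_D(Q)$ (from its initial state) such that there is no infinite $\pi$-trajectory $s_0,s_1,\dots$ of $Q$ whose boolean states are $\bar s_0,\bar s_1,\dots$.
   Context: A qualitative numerical problem (QNP) is a tuple $Q=\langle F,V,I,O,G\rangle$ where $F$ is a finite set of propositional variables and $V$ a finite set of numerical variables taking non-negative real values. $F$-literals are $p,\neg p$; $V$-literals are $X=0$ and $X>0$. $I$ and $G$ are consistent sets of $F$- and $V$-literals. Each action $a\in O$ has a precondition $Pre(a)$ (set of $F$- and $V$-literals), propositional effects $\mathit{Eff}(a)$ (set of $F$-literals) and numerical effects $N(a)$ (atoms $Inc(X)$, $Dec(X)$, at most one per variable); if $Dec(X)\in N(a)$ then $X>0\in Pre(a)$. A state $s$ assigns a truth value to each $p\in F$ and a real $s[X]\ge0$ to each $X\in V$. Initial states satisfy $I$ under a closed-world assumption. $a$ is applicable in $s$ if $s$ satisfies $Pre(a)$; goal states satisfy $G$. For applicable $a$, $s'\in F(a,s)$ iff propositional effects are applied (other atoms unchanged), $s'[X]>s[X]$ if $Inc(X)\in N(a)$, $s'[X]<s[X]$ if $Dec(X)\in N(a)$,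 and $s'[X]=s[X]$ otherwise. A trajectory is a sequence $s_0,a_0,s_1,\dots$ with $s_0$ initial, $a_i$ applicable in $s_i$, $s_{i+1}\in F(a_i,s_i)$, which for some $\epsilon>0$ is an $\epsilon$-trajectory: for all $X,i$, $s_{i+1}[X]\ne s_i[X]$ implies $|s_{i+1}[X]-s_i[X]|\ge\epsilon$ or $0=s_{i+1}[X]<s_i[X]<\epsilon$. The boolean state $\bar s$ of $s$ is the truth valuation on the atoms $p\in F$ and $X=0$. A policy is a partial map $\pi$ from states to actions with $\pi(s)=\pi(s')$ whenever $\bar s=\bar s'$; a $\pi$-trajectory has $a_i=\pi(s_i)$. A FOND problem has propositional states, a unique initial state, and actions with possibly nondeterministic effects $E_1\mid\cdots\mid E_k$; a $\pi$-trajectory is a sequence $t_0,t_1,\dots$ from the initial state with $\pi(t_i)$ applicable and $t_{i+1}$ a possible successor. The direct translation $T_D(Q)$ is the FOND problem over $F\cup\{p_{X=0}:X\in V\}$ obtained by reading $X=0$ as $p_{X=0}$ and $X>0$ as $\neg p_{X=0}$ in $I$, $G$, preconditions, keeping propositional effects, replacing $Inc(X)$ by the deterministic effect $\neg p_{X=0}$ and $Dec(X)$ by the nondeterministic effect $\neg p_{X=0}\mid p_{X=0}$. Its states are the boolean states of $Q$ and $\pi$ is used on it via $\bar s\mapsto\pi(s)$. *)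

From Stdlib Require Import Reals List FinFun.
Import ListNotations.
Open Scope R_scope.
Set Implicit Arguments.

Inductive flit (F : Type) := FPos (p : F) | FNeg (p : F).
Inductive vlit (V : Type) := VZero (X : V) | VPos (X : V).
Inductive lit (F V : Type) := LF (l : flit F) | LV (l : vlit V).
Inductive neff := Inc | Dec.
Arguments FPos {F} p. Arguments FNeg {F} p.
Arguments VZero {V} X. Arguments VPos {V} X.
Arguments LF {F V} l. Arguments LV {F V} l.

Record qnp (F V O : Type) := {
  qI : list (lit F V);
  qG : list (lit F V);
  qPre : O -> list (lit F V);
  qEff : O -> list (flit F);
  qN : O -> list (V * neff)
}.

Definition consistent_lits (F V : Type) (L : list (lit F V)) : Prop :=
  (forall p, ~ (In (LF (FPos p)) L /\ In (LF (FNeg p)) L)) /\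
  (forall X, ~ (In (LV (VZero X)) L /\ In (LV (VPos X)) L)).

Definition wf_qnp (F V O : Type) (Q : qnp F V O) : Prop :=
  Finite F /\ Finite V /\ Finite O /\
  consistent_lits (qI Q) /\ consistent_lits (qG Q) /\
  (forall a, NoDup (map fst (qN Q a))) /\
  (forall a X, In (X, Dec) (qN Q a) -> In (LV (VPos X)) (qPre Q a)).

Record state (F V : Type) := { sP : F -> bool; sX : V -> R }.

Definition is_state (F V : Type) (s : state F V) : Prop := forall X, 0 <= sX s X.

Definition sat_lit (F V : Type) (s : state F V) (l : lit F V) : Prop :=
  match l with
  | LF (FPos p) => sP s p = true
  | LF (FNeg p) => sP s p = false
  | LV (VZero X) => sX s X = 0
  | LV (VPos X) => 0 < sX s X
  end.

Definition sat (F V : Type) (s : state F V) (L : list (lit F V)) : Prop :=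
  forall l, In l L -> sat_lit s l.

(** Initial states: satisfy I, closed world on the boolean atoms p and X=0. *)
Definition qinitial (F V O : Type) (Q : qnp F V O) (s : state F V) : Prop :=
  is_state s /\ sat s (qI Q) /\
  (forall p, ~ In (LF (FPos p)) (qI Q) -> sP s p = false) /\
  (forall X, ~ In (LV (VZero X)) (qI Q) -> sX s X <> 0).

Definition qgoal (F V O : Type) (Q : qnp F V O) (s : state F V) : Prop :=
  sat s (qG Q).

Definition qapplicable (F V O : Type) (Q : qnp F V O) (a : O) (s : state F V) : Prop :=
  sat s (qPre Q a).

Definition qsucc (F V O : Type) (Q : qnp F V O) (a : O) (s s' : state F V) : Prop :=
  is_state s' /\
  (forall p, In (FPos p) (qEff Q a) -> sP s' p = true) /\
  (forall p, In (FNeg p) (qEff Q a) -> ~ In (FPos p) (qEff Q a) -> sP s' p = false) /\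
  (forall p, ~ In (FPos p) (qEff Q a) -> ~ In (FNeg p) (qEff Q a) -> sP s' p = sP s p) /\
  (forall X,
     (In (X, Inc) (qN Q a) -> sX s X < sX s' X) /\
     (In (X, Dec) (qN Q a) -> sX s' X < sX s X) /\
     (~ In (X, Inc) (qN Q a) -> ~ In (X, Dec) (qN Q a) -> sX s' X = sX s X)).

Definition eps_traj (F V : Type) (s : nat -> state F V) (eps : R) : Prop :=
  forall X i, sX (s (S i)) X <> sX (s i) X ->
    Rabs (sX (s (S i)) X - sX (s i) X) >= eps \/
    (0 = sX (s (S i)) X /\ sX (s (S i)) X < sX (s i) X /\ sX (s i) X < eps).

(** Boolean state of s: valuation of the atoms p (inl p) and X=0 (inr X). *)
Definition bool_state (F V : Type) (s : state F V) : F + V -> bool :=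
  fun x => match x with
           | inl p => sP s p
           | inr X => if Req_EM_T (sX s X) 0 then true else false
           end.

Definition is_policy (F V O : Type) (pi : state F V -> option O) : Prop :=
  forall s s', is_state s -> is_state s' ->
    (forall x, bool_state s x = bool_state s' x) -> pi s = pi s'.

Definition qnp_pi_traj (F V O : Type) (Q : qnp F V O) (pi : state F V -> option O)
    (s : nat -> state F V) : Prop :=
  qinitial Q (s 0%nat) /\
  (forall i, exists a, pi (s i) = Some a /\ qapplicable Q a (s i) /\
                       qsucc Q a (s i) (s (S i))) /\
  (exists eps, 0 < eps /\ eps_traj s eps).

(** * FOND problems over atoms A, actions Act.
    Literals are pairs (atom, polarity); effects of an action are a list of
    alternatives E_1 | ... | E_k, each a list of literals. *)
Record fond (A Act : Type) := {
  fI : list (A * bool);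
  fG : list (A * bool);
  fPre : Act -> list (A * bool);
  fEff : Act -> list (list (A * bool))
}.

Definition f_initial (A Act : Type) (P : fond A Act) (t : A -> bool) : Prop :=
  forall x, t x = true <-> In (x, true) (fI P).

Definition f_sat (A : Type) (t : A -> bool) (L : list (A * bool)) : Prop :=
  forall x b, In (x, b) L -> t x = b.

Definition f_apply (A : Type) (t : A -> bool) (E : list (A * bool)) (t' : A -> bool) : Prop :=
  forall x,
    (In (x, true) E -> t' x = true) /\
    (In (x, false) E -> ~ In (x, true) E -> t' x = false) /\
    (~ In (x, true) E -> ~ In (x, false) E -> t' x = t x).

Definition f_succ (A Act : Type) (P : fond A Act) (a : Act) (t t' : A -> bool) : Prop :=
  exists E, In E (fEff P a) /\ f_apply t E t'.

Definition fond_pi_traj (A Act : Type) (P : fond A Act) (pol : (A -> bool) -> option Act)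
    (t : nat -> A -> bool) : Prop :=
  f_initial P (t 0%nat) /\
  forall i, exists a, pol (t i) = Some a /\ f_sat (t i) (fPre P a) /\
                      f_succ P a (t i) (t (S i)).

(** * Direct translation T_D(Q): atoms F + V, inr X standing for p_{X=0}. *)
Definition tr_flit (F V : Type) (l : flit F) : (F + V) * bool :=
  match l with FPos p => (inl p, true) | FNeg p => (inl p, false) end.

Definition tr_lit (F V : Type) (l : lit F V) : (F + V) * bool :=
  match l with
  | LF l => tr_flit V l
  | LV (VZero X) => (inr X, true)
  | LV (VPos X) => (inr X, false)
  end.

(** Combine deterministic effects with the nondeterministic Dec effects
    (cross product of the independent choices). *)
Definition td_effs (F V : Type) (base : list ((F + V) * bool)) (N : list (V * neff))
  : list (list ((F + V) * bool)) :=
  fold_right (fun e acc =>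
     match e with
     | (X, Inc) => map (cons (inr X, false)) acc
     | (X, Dec) => map (cons (inr X, false)) acc ++ map (cons (inr X, true)) acc
     end) [base] N.

Definition T_D (F V O : Type) (Q : qnp F V O) : fond (F + V) O :=
  {| fI := map (@tr_lit F V) (qI Q);
     fG := map (@tr_lit F V) (qG Q);
     fPre := fun a => map (@tr_lit F V) (qPre Q a);
     fEff := fun a => td_effs (map (@tr_flit F V) (qEff Q a)) (qN Q a) |}.

(** A canonical state with a given boolean state; pi is used on T_D(Q) via it
    (well defined since pi only depends on the boolean state). *)
Definition lift (F V : Type) (t : F + V -> bool) : state F V :=
  {| sP := fun p => t (inl p); sX := fun X => if t (inr X) then 0 else 1 |}.

Definition td_policy (F V O : Type) (pi : state F V -> option O) : (F + V -> bool) -> option O :=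
  fun t => pi (lift t).

(* The boolean state of a QNP state determines the literals of T_D(Q), and every
   QNP transition is matched by the effect of T_D(Q) that records, for each
   decremented variable, whether it reached zero; so boolean abstraction maps
   trajectories to trajectories.  The converse fails because T_D(Q) may choose
   the outcome X > 0 of Dec(X) forever, whereas along an epsilon-trajectory a
   positive X can only decrease by at least epsilon each time and so reaches 0
   after finitely many decrements. *)

From Stdlib Require Import Reals List FinFun Lra Classical.
Import ListNotations.
Open Scope R_scope.
Set Implicit Arguments.

Section BooleanAbstraction.

Variables F V O : Type.
Implicit Types (s : state F V) (Q : qnp F V O).

Lemma bool_state_inr s X : bool_state s (inr X) = true <-> sX s X = 0.
Proof.
  simpl. destruct (Req_EM_T (sX s X) 0); split; congruence.
Qed.

Lemma bool_state_inr_ext s s' X :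
  sX s' X = sX s X -> bool_state s' (inr X) = bool_state s (inr X).
Proof. simpl. intros ->. reflexivity. Qed.

Lemma qnp_pi_traj_is_state Q (pi : state F V -> option O) (s : nat -> state F V) :
  qnp_pi_traj Q pi s -> forall i, is_state (s i).
Proof.
  intros [Hinit [Hstep _]] [|i].
  - exact (proj1 Hinit).
  - destruct (Hstep i) as [a [_ [_ [Hs _]]]]. exact Hs.
Qed.

Lemma lift_bool_state s x : bool_state (lift (bool_state s)) x = bool_state s x.
Proof.
  destruct x as [p|X]; [reflexivity|].
  simpl. destruct (Req_EM_T (sX s X) 0); destruct (Req_EM_T _ 0); lra.
Qed.

Lemma lift_is_state (t : F + V -> bool) : is_state (lift t).
Proof. intros X. simpl. destruct (t (inr X)); lra. Qed.

Lemma td_policy_bool_state (pi : state F V -> option O) s :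
  is_policy pi -> is_state s -> td_policy pi (bool_state s) = pi s.
Proof.
  intros Hpol Hs. apply Hpol; [apply lift_is_state | exact Hs |].
  intros x. apply lift_bool_state.
Qed.

Lemma bool_state_sat_lit s (l : lit F V) :
  sat_lit s l -> bool_state s (fst (tr_lit l)) = snd (tr_lit l).
Proof.
  destruct l as [[p|p]|[X|X]]; simpl; auto.
  - intros H. now apply bool_state_inr.
  - intros H. destruct (Req_EM_T (sX s X) 0); [lra | reflexivity].
Qed.

Lemma f_sat_bool_state s (L : list (lit F V)) :
  sat s L -> f_sat (bool_state s) (map (@tr_lit F V) L).
Proof.
  intros Hsat x b Hin. apply in_map_iff in Hin as [l [Hl Hin]].
  pose proof (bool_state_sat_lit s l (Hsat l Hin)) as H. rewrite Hl in H. exact H.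
Qed.

Lemma f_initial_bool_state Q s :
  qinitial Q s -> f_initial (T_D Q) (bool_state s).
Proof.
  intros (Hs & Hsat & Hcw_p & Hcw_X) x. simpl. split.
  - intros Htrue. apply in_map_iff.
    destruct x as [p|X]; [exists (LF (FPos p)) | exists (LV (VZero X))];
      split; auto; apply NNPP; intros Hnot.
    + simpl in Htrue. rewrite Hcw_p in Htrue; [discriminate | exact Hnot].
    + apply (Hcw_X X Hnot). now apply bool_state_inr.
  - intros Hin. exact (f_sat_bool_state Hsat _ _ Hin).
Qed.

(** The outcome of each nondeterministic [Dec(X)] is read off the successor [s']. *)
Definition num_outcome s' (e : V * neff) : (F + V) * bool :=
  (inr (fst e), match snd e with Inc => false | Dec => bool_state s' (inr (fst e)) end).

Definition observed_effect Q (a : O) s' : list ((F + V) * bool) :=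
  map (num_outcome s') (qN Q a) ++ map (@tr_flit F V) (qEff Q a).

Lemma num_outcomes_in_td_effs s' base (N : list (V * neff)) :
  In (map (num_outcome s') N ++ base) (td_effs base N).
Proof.
  induction N as [|[X []] N IH]; cbn [td_effs fold_right map app]; [now left | |].
  - apply in_map, IH.
  - apply in_or_app. change (num_outcome s' (X, Dec)) with (@inr F V X, bool_state s' (inr X)).
    destruct (bool_state s' (inr X)); [right | left]; apply in_map, IH.
Qed.

Lemma in_observed_effect_inl Q a s' p b :
  In (inl p, b) (observed_effect Q a s') <-> In (if b then FPos p else FNeg p) (qEff Q a).
Proof.
  unfold observed_effect. rewrite in_app_iff, !in_map_iff. split.
  - intros [[e [He _]] | [l [Hl Hin]]]; [discriminate |].
    destruct l; injection Hl as -> <-; exact Hin.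
  - intros Hin. right. exists (if b then FPos p else FNeg p). now destruct b.
Qed.

Lemma in_observed_effect_inr Q a s' X b :
  In (inr X, b) (observed_effect Q a s') <->
  exists e, In (X, e) (qN Q a) /\
            b = match e with Inc => false | Dec => bool_state s' (inr X) end.
Proof.
  unfold observed_effect. rewrite in_app_iff, !in_map_iff. split.
  - intros [[[Y e] [He Hin]] | [[] [Hl _]]]; try discriminate.
    injection He as -> <-. now exists e.
  - intros [e [Hin ->]]. left. now exists (X, e).
Qed.

Lemma observed_effect_inr_frame Q a s s' X :
  qsucc Q a s s' ->
  ~ In (inr X, true) (observed_effect Q a s') ->
  ~ In (inr X, false) (observed_effect Q a s') ->
  sX s' X = sX s X.
Proof.
  intros (_ & _ & _ & _ & HN) Htrue Hfalse. apply (HN X).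
  - intros Hin. apply Hfalse, in_observed_effect_inr. now exists Inc.
  - intros Hin. destruct (bool_state s' (inr X)) eqn:E;
      [apply Htrue | apply Hfalse]; apply in_observed_effect_inr; now exists Dec.
Qed.

Lemma f_apply_observed_effect Q a s s' :
  is_state s -> qsucc Q a s s' ->
  f_apply (bool_state s) (observed_effect Q a s') (bool_state s').
Proof.
  intros Hs Hsucc. pose proof Hsucc as (_ & Htrue & Hfalse & Hframe & HN).
  intros [p|X]; split; [| split | | split].
  - intros Hin. apply Htrue. now apply (in_observed_effect_inl Q a s' p true).
  - intros Hin Hnin. apply Hfalse.
    + now apply (in_observed_effect_inl Q a s' p false).
    + intros H. apply Hnin. now apply (in_observed_effect_inl Q a s' p true).
  - intros Hnt Hnf. apply Hframe; intros H; [apply Hnt | apply Hnf];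
      [apply (in_observed_effect_inl Q a s' p true) | apply (in_observed_effect_inl Q a s' p false)];
      exact H.
  - intros Hin. apply in_observed_effect_inr in Hin as [[] [_ Hb]]; congruence.
  - intros Hin _. apply in_observed_effect_inr in Hin as [[] [Hin Hb]]; [| congruence].
    destruct (bool_state s' (inr X)) eqn:E; [| reflexivity].
    apply bool_state_inr in E. pose proof (proj1 (HN X) Hin). pose proof (Hs X). lra.
  - intros Hnt Hnf. apply bool_state_inr_ext.
    eapply observed_effect_inr_frame; eassumption.
Qed.

Lemma f_succ_bool_state Q a s s' :
  is_state s -> qsucc Q a s s' -> f_succ (T_D Q) a (bool_state s) (bool_state s').
Proof.
  intros Hs Hsucc. exists (observed_effect Q a s'). split.
  - apply num_outcomes_in_td_effs.
  - now apply f_apply_observed_effect.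
Qed.

Lemma fond_pi_traj_bool_state Q (pi : state F V -> option O) (s : nat -> state F V) :
  is_policy pi -> qnp_pi_traj Q pi s ->
  fond_pi_traj (T_D Q) (td_policy pi) (fun i => bool_state (s i)).
Proof.
  intros Hpol Htraj. pose proof (qnp_pi_traj_is_state Htraj) as Hst.
  destruct Htraj as [Hinit [Hstep _]]. split.
  - now apply f_initial_bool_state.
  - intros i. destruct (Hstep i) as [a [Ha [Happ Hsucc]]]. exists a. repeat split.
    + now rewrite td_policy_bool_state.
    + now apply f_sat_bool_state.
    + now apply f_succ_bool_state.
Qed.

Lemma eps_traj_positive_decrease (s : nat -> state F V) eps X i :
  eps_traj s eps -> sX (s (S i)) X < sX (s i) X -> sX (s (S i)) X <> 0 ->
  sX (s (S i)) X <= sX (s i) X - eps.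
Proof.
  intros Htraj Hlt Hnz. destruct (Htraj X i) as [H | [H _]]; [lra | | congruence].
  rewrite Rabs_left in H; lra.
Qed.

End BooleanAbstraction.

Lemma eps_descent_eventually_negative (u : nat -> R) eps :
  0 < eps -> (forall i, u (S i) <= u i - eps) -> exists n, u n < 0.
Proof.
  intros Heps Hdec.
  assert (Hn : forall n, u n <= u 0%nat - INR n * eps).
  { induction n; [simpl; lra |]. rewrite S_INR. specialize (Hdec n). lra. }
  destruct (INR_unbounded (u 0%nat / eps)) as [n Hn'].
  exists n. specialize (Hn n).
  assert (u 0%nat < INR n * eps).
  { apply Rmult_lt_reg_r with (/ eps); [now apply Rinv_0_lt_compat |].
    rewrite Rmult_assoc, Rinv_r by lra. lra. }
  lra.
Qed.

Definition countdown : qnp Empty_set unit unit :=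
  {| qI := [LV (VPos tt)]; qG := []; qPre := fun _ => [LV (VPos tt)];
     qEff := fun _ => []; qN := fun _ => [(tt, Dec)] |}.

Definition countdown_policy : state Empty_set unit -> option unit := fun _ => Some tt.

Lemma wf_countdown : wf_qnp countdown.
Proof.
  repeat split.
  - exists []. intros [].
  - exists [tt]. intros []. now left.
  - exists [tt]. intros []. now left.
  - intros p [[H | []] _]. discriminate.
  - intros X [[H | []] _]. discriminate.
  - intros p [[] _].
  - intros X [[] _].
  - intros a. constructor; [intros [] | constructor].
  - intros a X [H | []]. injection H as <-. now left.
Qed.

Lemma countdown_policy_is_policy : is_policy countdown_policy.
Proof. intros s s' _ _ _. reflexivity. Qed.

Lemma countdown_fond_traj :
  fond_pi_traj (T_D countdown) (td_policy countdown_policy) (fun _ _ => false).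
Proof.
  split.
  - intros x. split; [discriminate |]. intros [H | []]. discriminate.
  - intros i. exists tt. repeat split.
    + intros x b [H | []]. now injection H as <- <-.
    + exists [(inr tt, false)]. split; [now left |].
      intros x. repeat split; intros [H | []]; discriminate.
Qed.

Lemma countdown_no_qnp_traj :
  ~ (exists s : nat -> state Empty_set unit,
       qnp_pi_traj countdown countdown_policy s /\
       forall i x, bool_state (s i) x = false).
Proof.
  intros [s [Htraj Hb]]. pose proof (qnp_pi_traj_is_state Htraj) as Hst.
  destruct Htraj as [_ [Hstep [eps [Heps Heps_traj]]]].
  assert (Hnz : forall i, sX (s i) tt <> 0).
  { intros i H. apply bool_state_inr in H. rewrite Hb in H. discriminate. }
  destruct (eps_descent_eventually_negative (fun i => sX (s i) tt) Heps) as [n Hn].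
  - intros i. apply (eps_traj_positive_decrease tt i Heps_traj); [| apply Hnz].
    destruct (Hstep i) as [a [_ [_ (_ & _ & _ & _ & HN)]]].
    apply (HN tt). now left.
  - pose proof (Hst n tt). lra.
Qed.

Theorem theorem2 :
  (forall (F V O : Type) (Q : qnp F V O) (pi : state F V -> option O)
          (s : nat -> state F V),
     wf_qnp Q -> is_policy pi -> qnp_pi_traj Q pi s ->
     fond_pi_traj (T_D Q) (td_policy pi) (fun i => bool_state (s i)))
  /\
  (exists (F V O : Type) (Q : qnp F V O) (pi : state F V -> option O)
          (t : nat -> F + V -> bool),
     wf_qnp Q /\ is_policy pi /\ fond_pi_traj (T_D Q) (td_policy pi) t /\
     ~ (exists s : nat -> state F V,
          qnp_pi_traj Q pi s /\ forall i x, bool_state (s i) x = t i x)).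
Proof.
  split.
  - intros F V O Q pi s _. apply fond_pi_traj_bool_state.
  - exists Empty_set, unit, unit, countdown, countdown_policy, (fun _ _ => false).
    split; [| split; [| split]].
    + exact wf_countdown.
    + exact countdown_policy_is_policy.
    + exact countdown_fond_traj.
    + exact countdown_no_qnp_traj.
Qed.
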